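(* Consider the recursive network formation model with the utility function described in the context. If $$b_1-b_2+\gamma b_2 \le c < b_1 \quad\text{and}\quad c_0 < (1-\gamma)(b_2-b_3),$$ then the resulting topology is a star: starting from a single node, for every $n\ge 1$, the pairwise stable network reached after the $n$-th node has entered is a star on $n$ nodes (one center adjacent to all other nodes, and no other links), irrespective of the random order in which nodes are selected to move.
   Context: Networks are finite simple undirected graphs whose vertices (nodes) are self-interested agents. Parameters: benefits $b_1>b_2>b_3>b_4>\dots>0$, where $b_i$ is the benefit a node obtains from a node at distance $i$; a link cost $c$ per immediate neighbor; an intermediation fraction $\gamma$ with $0\le\gamma<1$; and a network entry factor $c_0$. Notation: $N$ is the set of nodes currently in the network, $d_j$ the degree of $j$, and $l(j,w)$ the graph distance. A node $x$ is essential for a pair $y,z$ (with $x\notin\{y,z\}$) if $x$ lies on every path joining $y$ and $z$. Write $E(y,z)$ for the set of nodes essential for $y,z$ and $e(y,z)=|E(y,z)|$. Only pairs joined by a path contribute to the sums below. Utility of node $j$ in network $g$: $$u_j(g)=-c_0\,d_{T(j)}\mathbf 1_{\{j=\mathrm{NE}\}}+d_j(b_1-c)+\sum_{w\in N,\ l(j,w)>1}b_{l(j,w)}-\sum_{w\in N,\ E(j,w)\ne\emptyset}\gamma\, b_{l(j,w)}+\sum_{y,z\in N,\ j\in E(y,z)}\frac{\gamma}{e(y,z)}\,2\,b_{l(y,z)}.$$ Here $\mathbf 1_{\{j=\mathrm{NE}\}}=1$ exactly when $j$ is a newly entering node evaluating the creation of its first link. $T(j)$ is the existing node to which $j$ forms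 that first link, and $d_{T(j)}$ is that node's degree before the link. The network before entry gives the entering node utility $0$. Pairwise stability: $g$ is pairwise stable if (a) for every link $(i,j)\in g$, $u_i(g\setminus\{(i,j)\})\le u_i(g)$ and $u_j(g\setminus\{(i,j)\})\le u_j(g)$; and (b) for every non-link $(i,j)\notin g$, if $u_i(g\cup\{(i,j)\})>u_i(g)$ then $u_j(g\cup\{(i,j)\})<u_j(g)$. Recursive model of network formation: - The process starts with a single node. - When the current network of $n-1$ nodes is pairwise stable, a new node considers entering. Its options are to stay out or to propose a link to one existing node. The link forms iff the receiving node's utility does not decrease. No existing node can link to the newcomer before it has formed this first link. - After entry, nodes are repeatedly chosen at random to move. A chosen node plays a myopic best response among three options: create a link with a non-neighbor (the link forms only if the other node's utility does not decrease, which the proposer anticipates); delete a link with a neighbor (unilaterally); or keep the status quo. It alters a link only if this strictly increases its current utility. - This continues until the network is pairwise stable; then the next node considers entering, and so on. ''The resulting topology is X'' means: for every number $n$ of nodes, every pairwise stable network reached after the $n$-th node has entered is a network of topology X on $n$ nodes, irrespective of the random choices. *)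

(* Nodes are natural numbers 0..n-1; a network on n nodes is
   given by its node count n and a raw edge relation e : rel nat, of which only
   the symmetrised, loop-free part among nodes < n is meaningful (see [adj]). *)
From HB Require Import structures.
From mathcomp Require Import all_boot all_order all_algebra.
Set Implicit Arguments. Unset Strict Implicit. Unset Printing Implicit Defensive.
Import Order.TTheory GRing.Theory Num.Theory.

Definition adj (n : nat) (e : rel nat) : rel nat :=
  fun x y => [&& x < n, y < n, x != y & e x y || e y x].

Fixpoint reachw (n : nat) (a : rel nat) (k : nat) (y z : nat) : bool :=
  if k is k'.+1 then
    reachw n a k' y z || [exists w : 'I_n, reachw n a k' y w && a w z]
  else y == z.

(* connected: joined by a path (a path has at most n-1 edges) *)
Definition connected (n : nat) (a : rel nat) (y z : nat) : bool :=
  reachw n a n y z.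

(* graph distance l(y,z): least k such that z is within k edges of y
   (only meaningful for connected pairs) *)
Definition dist (n : nat) (a : rel nat) (y z : nat) : nat :=
  find (fun k => reachw n a k y z) (iota 0 n).

Definition avoid (a : rel nat) (x : nat) : rel nat :=
  fun u v => [&& a u v, u != x & v != x].

Definition essential (n : nat) (a : rel nat) (x y z : nat) : bool :=
  [&& x < n, x != y, x != z, connected n a y z & ~~ connected n (avoid a x) y z].

Definition ecount (n : nat) (a : rel nat) (y z : nat) : nat :=
  #|[pred x : 'I_n | essential n a x y z]|.

Definition deg (n : nat) (e : rel nat) (j : nat) : nat :=
  #|[pred w : 'I_n | adj n e j w]|.

Local Open Scope ring_scope.

(* utility of node j, without the entry term (which is added separately in the
   entry step of the formation process) *)
Definition utility (R : realFieldType) (b : nat -> R) (c gam : R)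
    (n : nat) (e : rel nat) (j : nat) : R :=
  let a := adj n e in
  (deg n e j)%:R * (b 1%N - c)
  + \sum_(w < n | connected n a j w && (1 < dist n a j w)%N) b (dist n a j w)
  - \sum_(w < n | [exists x : 'I_n, essential n a x j w]) gam * b (dist n a j w)
  + \sum_(y < n) \sum_(z < n | (y < z)%N && essential n a j y z)
       gam / (ecount n a y z)%:R * 2 * b (dist n a y z).

Definition add_link (e : rel nat) (i j : nat) : rel nat :=
  fun x y => e x y || ((x == i) && (y == j)) || ((x == j) && (y == i)).

Definition del_link (e : rel nat) (i j : nat) : rel nat :=
  fun x y => e x y && ~~ (((x == i) && (y == j)) || ((x == j) && (y == i))).

Definition pairwise_stable (R : realFieldType) (b : nat -> R) (c gam : R)
    (n : nat) (e : rel nat) : Prop :=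
  (forall i j : nat, adj n e i j ->
      utility b c gam n (del_link e i j) i <= utility b c gam n e i /\
      utility b c gam n (del_link e i j) j <= utility b c gam n e j) /\
  (forall i j : nat, (i < n)%N -> (j < n)%N -> i != j -> ~~ adj n e i j ->
      utility b c gam n e i < utility b c gam n (add_link e i j) i ->
      utility b c gam n (add_link e i j) j < utility b c gam n e j).

(* the networks node i can bring about by one of its options other than the
   status quo: delete a link unilaterally, or create a link with a non-neighbor
   j that j accepts (j's utility does not decrease) *)
Definition option_result (R : realFieldType) (b : nat -> R) (c gam : R)
    (n : nat) (e : rel nat) (i : nat) (e' : rel nat) : Prop :=
  (exists j, adj n e i j /\ e' = del_link e i j) \/
  (exists j, [/\ (j < n)%N, j != i, ~~ adj n e i j,
     utility b c gam n e j <= utility b c gam n (add_link e i j) j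
     & e' = add_link e i j]).

(* entry of the new node n linking to the existing node T, in network (n,e):
   acceptance by T and the entering node's payoff (with the entry term) *)
Definition entry_accepts (R : realFieldType) (b : nat -> R) (c gam : R)
    (n : nat) (e : rel nat) (T : nat) : Prop :=
  utility b c gam n e T <= utility b c gam n.+1 (add_link e n T) T.

Definition entry_value (R : realFieldType) (b : nat -> R) (c gam c0 : R)
    (n : nat) (e : rel nat) (T : nat) : R :=
  utility b c gam n.+1 (add_link e n T) n - c0 * (deg n e T)%:R.

(* states reachable by the recursive formation process, starting from a single
   node, under any random choices *)
Inductive reachable (R : realFieldType) (b : nat -> R) (c gam c0 : R) :
    nat -> rel nat -> Prop :=
| reach_init : reachable b c gam c0 1 (fun _ _ => false)
| reach_entry n e T :
    reachable b c gam c0 n e ->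
    pairwise_stable b c gam n e ->
    (T < n)%N ->
    entry_accepts b c gam n e T ->
    0 < entry_value b c gam c0 n e T ->
    (forall T', (T' < n)%N -> entry_accepts b c gam n e T' ->
        entry_value b c gam c0 n e T' <= entry_value b c gam c0 n e T) ->
    reachable b c gam c0 n.+1 (add_link e n T)
| reach_move n e i e' :
    reachable b c gam c0 n e ->
    (i < n)%N ->
    option_result b c gam n e i e' ->
    utility b c gam n e i < utility b c gam n e' i ->
    (forall e'', option_result b c gam n e i e'' ->
        utility b c gam n e'' i <= utility b c gam n e' i) ->
    reachable b c gam c0 n e'.

Definition is_star (n : nat) (e : rel nat) : Prop :=
  exists2 k, (k < n)%N &
    forall x y, (x < n)%N -> (y < n)%N -> x != y ->
      adj n e x y = (x == k) || (y == k).

(* Proof: we show that every reachable network is a star (an invariant of the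
   inductive predicate [reachable]), which is more than the theorem asks since
   it holds for all reachable states, stable or not.
   - Walks, distances and essential nodes are related to reachability in the
     bounded relation [adj n e]; we rewrite the utility [utility] as a sum
     [U] of direct, indirect ([dist_payoff]) and brokerage ([broker_payoff])
     terms, and compute [U] in a star: the center earns 2 gam b_2 per pair of
     leaves, a leaf gets (1 - gam) b_2 per other leaf.
   - No node has a strictly improving option in a star: a leaf that drops its
     link becomes isolated (utility 0), the center loses only terms by dropping
     a leaf, and a link between two leaves trades (1 - gam) b_2 for b_1 - c,
     which is no gain since c >= b_1 - b_2 + gam b_2.  So moves never happen.
   - At entry, the center accepts the newcomer, and linking to a leaf is
     strictly worse for the newcomer than linking to the center once n >= 3,
     because c0 < (1 - gam)(b_2 - b_3); so the newcomer joins the center (or,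
     with two nodes, either node), and the network stays a star. *)
From HB Require Import structures.
From mathcomp Require Import all_boot all_order all_algebra.
From mathcomp Require Import zify ring lra.
From Stdlib Require Import FunctionalExtensionality.
Set Implicit Arguments. Unset Strict Implicit. Unset Printing Implicit Defensive.
Import Order.TTheory GRing.Theory Num.Theory.

Section Walks.
Variables (N : nat) (a : rel nat).
Hypothesis a_bounded : forall x y, a x y -> (x < N) && (y < N).

Lemma reach_refl m y : reachw N a m y y.
Proof. by elim: m => [|m IH] /=; rewrite ?eqxx ?IH. Qed.

Lemma reach_mono m m' y z : m <= m' -> reachw N a m y z -> reachw N a m' y z.
Proof.
move=> /subnK <-; elim: (m' - m) => [//|d IH] H.
by rewrite addSn /= IH.
Qed.

Lemma reach_step m y w z : reachw N a m y w -> a w z -> reachw N a m.+1 y z.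
Proof.
move=> Hyw Hwz /=; apply/orP; right.
have /andP[hw _] := a_bounded Hwz.
by apply/existsP; exists (Ordinal hw); rewrite /= Hyw Hwz.
Qed.

Lemma reach1 y z : reachw N a 1 y z = (y == z) || a y z.
Proof.
rewrite /=; congr (_ || _); apply/existsP/idP => [[w /andP[/eqP -> //]]|H].
have /andP[hy _] := a_bounded H.
by exists (Ordinal hy); rewrite /= eqxx H.
Qed.

Lemma reach2 y k z : a y k -> a k z -> reachw N a 2 y z.
Proof. by move=> Hyk Hkz; apply: reach_step Hkz; apply: reach_step Hyk; apply: reach_refl. Qed.

Lemma reach_closed (P : pred nat) m y z : P y ->
  (forall w z, P w -> a w z -> P z) -> reachw N a m y z -> P z.
Proof.
move=> Py HP; elim: m z => [|m IH] z /=; first by move/eqP <-.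
by case/orP => [/IH //|/existsP[w /andP[/IH Hw Hwz]]]; apply: HP Hwz.
Qed.

Lemma dist_spec y z : connected N a y z -> reachw N a (dist N a y z) y z.
Proof.
move=> Hc; rewrite /dist.
case: (boolP (has (fun k => reachw N a k y z) (iota 0 N))) => Hh.
  have := nth_find 0 Hh; have Hf := Hh; rewrite has_find size_iota in Hf.
  by rewrite nth_iota ?add0n.
by rewrite (hasNfind Hh) size_iota.
Qed.

Lemma dist_le d y z : reachw N a d y z -> dist N a y z <= d.
Proof.
move=> H; rewrite leqNgt; apply/negP => Hd; move: (before_find 0 Hd).
have Hs : d < N.
  apply: leq_trans Hd _.
  by have := find_size (fun k => reachw N a k y z) (iota 0 N); rewrite size_iota.
by rewrite nth_iota // add0n H.
Qed.

Lemma dist_gt d y z : connected N a y z -> ~~ reachw N a d y z -> d < dist N a y z.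
Proof.
move=> Hc Hn; rewrite ltnNge; apply/negP => Hle.
by move: Hn; rewrite (reach_mono Hle (dist_spec Hc)).
Qed.

Lemma dist2 k y z : y != z -> ~~ a y z -> a y k -> a k z -> 2 <= N ->
  dist N a y z = 2.
Proof.
move=> Hyz Hn Hyk Hkz HN; have H2 := reach2 Hyk Hkz.
apply/eqP; rewrite eqn_leq (dist_le H2) /=.
by apply: (dist_gt (d := 1)); [exact: reach_mono H2 | rewrite reach1 negb_or Hyz].
Qed.

End Walks.

Section Essential.
Variables (N : nat) (a : rel nat).
Hypothesis a_bounded : forall x y, a x y -> (x < N) && (y < N).

Lemma avoid_bounded x u v : avoid a x u v -> (u < N) && (v < N).
Proof. by case/andP=> /a_bounded. Qed.

Lemma ess_basic x y z : essential N a x y z ->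
  [/\ x != y, x != z, y != z, connected N a y z & ~~ a y z].
Proof.
case/and5P=> Hx Hxy Hxz Hc Hn; split => //.
  by apply/negP => /eqP E; subst z; move: Hn; rewrite /connected reach_refl.
apply/negP => Hyz; move: Hn; rewrite /connected.
have H1 : reachw N (avoid a x) 1 y z.
  by rewrite (reach1 (@avoid_bounded x)) /avoid Hyz (eq_sym y x) Hxy (eq_sym z x) Hxz orbT.
have /andP[hy _] := a_bounded Hyz.
by rewrite (reach_mono _ H1) // (leq_ltn_trans _ hy).
Qed.

Lemma ess_dist x y z : essential N a x y z -> 1 < dist N a y z.
Proof.
case/ess_basic=> _ _ Hyz Hc Hn; apply: dist_gt => //.
by rewrite (reach1 a_bounded) negb_or Hyz.
Qed.

Lemma ess_pendant x y z : x < N -> x != y -> x != z -> y != z ->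
  connected N a y z -> (forall w, a y w -> w == x) -> essential N a x y z.
Proof.
move=> Hx Hxy Hxz Hyz Hc Ho; rewrite /essential Hx Hxy Hxz Hc /=.
apply/negP => H.
suff : pred1 y z by rewrite /= eq_sym (negbTE Hyz).
apply: (reach_closed (P := pred1 y) _ _ H) => //= w z' /eqP -> /and3P[/Ho Hz _].
by rewrite (eqP Hz) eqxx.
Qed.

Lemma ess_hub x k y z : x != k -> y != x -> z != x -> (y == k) || a y k ->
  (k == z) || a k z -> 2 <= N -> ~~ essential N a x y z.
Proof.
move=> Hxk Hyx Hzx Hyk Hkz HN.
rewrite /essential negb_and; apply/orP; right.
rewrite !negb_and; apply/orP; right; apply/orP; right; apply/orP; right.
rewrite negbK /connected; apply: (reach_mono HN).
have H1 : reachw N (avoid a x) 1 y k.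
  rewrite (reach1 (@avoid_bounded x)) /avoid Hyx (eq_sym k x) Hxk andbT.
  by case/orP: Hyk => ->; rewrite ?orbT.
case/orP: Hkz => [/eqP <-|Hkz]; first exact: reach_mono H1.
by apply: (reach_step (@avoid_bounded x) H1); rewrite /avoid Hkz (eq_sym k x) Hxk Hzx.
Qed.

Lemma ecount1 k y z : essential N a k y z -> a y k -> a k z -> ecount N a y z = 1.
Proof.
move=> He Hyk Hkz.
have /andP[hy hk] := a_bounded Hyk.
have [Hky Hkz' Hyz _ _] := ess_basic He.
have HN : 2 <= N by move/eqP: Hyz; lia.
rewrite /ecount -(card1 (Ordinal hk)); apply: eq_card => x /=.
rewrite inE; apply/idP/idP => [Hx|/eqP -> //].
apply/negPn/negP => Hne.
have Hxk : (x : nat) != k by apply: contra Hne => /eqP E; apply/eqP/val_inj.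
have [Hxy Hxz _ _ _] := ess_basic Hx.
by move: Hx; apply/negP; apply: (ess_hub Hxk); rewrite 1?eq_sym ?Hyk ?Hkz ?orbT.
Qed.

End Essential.

Definition is_link (i j x y : nat) : bool :=
  ((x == i) && (y == j)) || ((x == j) && (y == i)).

Lemma is_link_sym i j x y : is_link i j x y = is_link i j y x.
Proof. by rewrite /is_link orbC (andbC (x == j)) (andbC (x == i)). Qed.

Lemma is_link_ends i j x y : i != j -> is_link i j x y ->
  [/\ x != y, (x == i) || (x == j) & (y == i) || (y == j)].
Proof.
move=> Hij /orP[] /andP[/eqP-> /eqP->]; rewrite ?eqxx ?orbT //.
by split; rewrite // eq_sym.
Qed.

Lemma add_linkE (e : rel nat) i j x y : add_link e i j x y = e x y || is_link i j x y.
Proof. by rewrite /add_link /is_link orbA. Qed.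

Lemma del_link_bounded N (a : rel nat) i j :
  (forall x y, a x y -> (x < N) && (y < N)) ->
  forall x y, del_link a i j x y -> (x < N) && (y < N).
Proof. by move=> Hb x y /andP[/Hb]. Qed.

Lemma add_link_bounded N (a : rel nat) i j : i < N -> j < N ->
  (forall x y, a x y -> (x < N) && (y < N)) ->
  forall x y, add_link a i j x y -> (x < N) && (y < N).
Proof.
move=> Hi Hj Hb x y; rewrite add_linkE => /orP[/Hb //|].
by case/orP=> /andP[/eqP-> /eqP->]; rewrite Hi Hj.
Qed.

Lemma adj_del n e i j : adj n (del_link e i j) = del_link (adj n e) i j.
Proof.
apply: functional_extensionality => x; apply: functional_extensionality => y.
rewrite /adj /del_link -!/(is_link i j _ _) (is_link_sym i j y x).
by case: (is_link i j x y); rewrite /= ?andbT ?andbF // ?orbF.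
Qed.

Lemma adj_add n e i j : i < n -> j < n -> i != j ->
  adj n (add_link e i j) = add_link (adj n e) i j.
Proof.
move=> Hi Hj Hij.
apply: functional_extensionality => x; apply: functional_extensionality => y.
rewrite /adj !add_linkE (is_link_sym i j y x).
case Hp: (is_link i j x y); last by rewrite !orbF.
have [Hxy Hx Hy] := is_link_ends Hij Hp.
have Hxn : x < n by case/orP: Hx => /eqP->.
have Hyn : y < n by case/orP: Hy => /eqP->.
by rewrite Hxn Hyn Hxy !orbT.
Qed.

Lemma adj_entry n (e : rel nat) T : (forall x y, e x y -> (x < n) && (y < n)) ->
  T < n -> adj n.+1 (add_link e n T) = add_link (adj n e) n T.
Proof.
move=> Hb HT.
have HnT : n != T by rewrite neq_ltn HT orbT.
have Hlt x y : e x y -> (x < n.+1) && (y < n.+1).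
  by case/Hb/andP=> h1 h2; rewrite !ltnS (ltnW h1) (ltnW h2).
apply: functional_extensionality => x; apply: functional_extensionality => y.
rewrite /adj !add_linkE (is_link_sym n T y x).
case Hp: (is_link n T x y); last first.
  rewrite !orbF; case Hxy: (e x y); case Hyx: (e y x); rewrite /= ?andbF //.
  - by have /andP[h1 h2] := Hb _ _ Hxy; rewrite h1 h2 (andP (Hlt _ _ Hxy)).1 (andP (Hlt _ _ Hxy)).2.
  - by have /andP[h1 h2] := Hb _ _ Hxy; rewrite h1 h2 (andP (Hlt _ _ Hxy)).1 (andP (Hlt _ _ Hxy)).2.
  - by have /andP[h1 h2] := Hb _ _ Hyx; rewrite h1 h2 (andP (Hlt _ _ Hyx)).1 (andP (Hlt _ _ Hyx)).2.
have [Hxy Hx Hy] := is_link_ends HnT Hp.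
have Hxn : x < n.+1 by case/orP: Hx => /eqP->; rewrite // ltnS ltnW.
have Hyn : y < n.+1 by case/orP: Hy => /eqP->; rewrite // ltnS ltnW.
by rewrite Hxn Hyn Hxy !orbT.
Qed.

Definition star N k : rel nat :=
  fun x y => [&& x < N, y < N, x != y & (x == k) || (y == k)].

Lemma star_bounded N k x y : star N k x y -> (x < N) && (y < N).
Proof. by case/and4P=> -> ->. Qed.

Lemma star_in N k x y : x < N -> y < N -> x != y -> (x == k) || (y == k) ->
  star N k x y.
Proof. by move=> Hx Hy Hxy Hk; rewrite /star Hx Hy Hxy Hk. Qed.

Lemma star_leaf N k x y : x != k -> star N k x y -> y == k.
Proof. by move=> Hxk /and4P[_ _ _]; rewrite (negbTE Hxk). Qed.

Lemma star_entry n k : k < n -> add_link (star n k) n k = star n.+1 k.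
Proof.
move=> Hk.
have Hnk : (n == k) = false by apply/negbTE; rewrite neq_ltn Hk orbT.
apply: functional_extensionality => x; apply: functional_extensionality => y.
rewrite add_linkE /star /is_link.
case: (eqVneq x n) => [->|Hx]; case: (eqVneq y n) => [->|Hy].
- by rewrite Hnk /= !andbF.
- by case: (eqVneq y k) => [->|_]; rewrite Hnk ltnn !ltnS leqnn ?(ltnW Hk) /= ?andbF ?orbF.
- by case: (eqVneq x k) => [->|_];
    rewrite Hnk ltnn !ltnS leqnn ?(ltnW Hk) ?Hx /= ?andbF ?orbF ?andbT // neq_ltn Hk.
- by rewrite /= !andbF !orbF !ltnS (leq_eqVlt x) (leq_eqVlt y) (negbTE Hx) (negbTE Hy).
Qed.

Lemma star2 k T : k < 2 -> T < 2 -> star 2 k = star 2 T.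
Proof.
move=> Hk HT.
apply: functional_extensionality => x; apply: functional_extensionality => y.
rewrite /star; case Hx: (x < 2); case Hy: (y < 2) => //=.
case: eqVneq => //= Hxy.
have H t : t < 2 -> (x == t) || (y == t).
  by move: Hx Hy Hxy; case: x => [|[|x]] //; case: y => [|[|y]] //; case: t => [|[|t]].
by rewrite (H k Hk) (H T HT).
Qed.

Lemma two_le N x y : x < N -> y < N -> x != y -> 2 <= N.
Proof. by move=> Hx Hy /eqP Hxy; lia. Qed.

Lemma card_eq1 N x : x < N -> #|[pred w : 'I_N | (w : nat) == x]| = 1.
Proof. by move=> Hx; rewrite -(card1 (Ordinal Hx)); apply: eq_card => w; rewrite !inE. Qed.

Lemma card_eq2 N x y : x < N -> y < N -> x != y ->
  #|[pred w : 'I_N | ((w : nat) == x) || ((w : nat) == y)]| = 2.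
Proof.
move=> Hx Hy Hxy.
have -> : #|[pred w : 'I_N | ((w : nat) == x) || ((w : nat) == y)]| =
          #|pred2 (Ordinal Hx) (Ordinal Hy)| by apply: eq_card => w; rewrite !inE.
by rewrite card2 -(inj_eq val_inj) /= Hxy.
Qed.

Lemma card_ne1 N x : x < N -> #|[pred w : 'I_N | (w : nat) != x]| = N - 1.
Proof.
move=> Hx; have := cardC1 (Ordinal Hx); rewrite card_ord subn1 => <-.
by apply: eq_card => w; rewrite !inE.
Qed.

Lemma card_ne2 N x y : x < N -> y < N -> x != y ->
  #|[pred w : 'I_N | ((w : nat) != x) && ((w : nat) != y)]| = N - 2.
Proof.
move=> Hx Hy Hxy.
have := cardD1 (Ordinal Hx) [pred w : 'I_N | (w : nat) != y].
rewrite card_ne1 // !inE /= Hxy.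
have -> : #|[predD1 [pred w : 'I_N | (w : nat) != y] & Ordinal Hx]| =
          #|[pred w : 'I_N | ((w : nat) != x) && ((w : nat) != y)]|.
  by apply: eq_card => w; rewrite !inE.
by move=> /= E; lia.
Qed.

Lemma deg_center N k : k < N -> #|[pred w : 'I_N | star N k k w]| = N - 1.
Proof.
move=> Hk; rewrite -(card_ne1 Hk); apply: eq_card => w.
by rewrite !inE /star Hk ltn_ord eqxx /= andbT eq_sym.
Qed.

Lemma deg_leaf N k j : k < N -> j < N -> j != k ->
  #|[pred w : 'I_N | star N k j w]| = 1.
Proof.
move=> Hk Hj Hjk; rewrite -(card_eq1 Hk); apply: eq_card => w.
rewrite !inE /star Hj ltn_ord /= (negbTE Hjk) /=.
by case: (eqVneq (w : nat) k) => [->|_]; rewrite ?andbT ?andbF.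
Qed.

Local Open Scope ring_scope.

Section Payoffs.
Variables (R : realFieldType) (b : nat -> R) (c gam : R).
Hypothesis hbdec : forall i : nat, (0 < i)%N -> b i.+1 < b i.
Hypothesis hbpos : forall i : nat, (0 < i)%N -> 0 < b i.
Hypothesis hg0 : 0 <= gam.
Hypothesis hg1 : gam < 1.

Definition dist_payoff N (a : rel nat) j w : R :=
  (if connected N a j w && (1 < dist N a j w)%N then b (dist N a j w) else 0)
  - (if [exists x : 'I_N, essential N a x j w] then gam * b (dist N a j w) else 0).

Definition broker_payoff N (a : rel nat) j y z : R :=
  if (y < z)%N && essential N a j y z then
    gam / (ecount N a y z)%:R * 2 * b (dist N a y z) else 0.

Definition U N (a : rel nat) j : R :=
  (#|[pred w : 'I_N | a j w]|)%:R * (b 1%N - c)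
  + \sum_(w < N) dist_payoff N a j w + \sum_(y < N) \sum_(z < N) broker_payoff N a j y z.

Lemma utilityE N e j : utility b c gam N e j = U N (adj N e) j.
Proof.
rewrite /utility /U /dist_payoff /broker_payoff; congr (_ + _).
  rewrite -addrA; congr (_ + _).
  rewrite [X in _ - X]big_mkcond [X in X - _]big_mkcond /= -sumrB.
  by apply: eq_bigr => w _.
by apply: eq_bigr => y _; rewrite big_mkcond.
Qed.

Lemma b_antitone d d' : (0 < d)%N -> (d <= d')%N -> b d' <= b d.
Proof.
move=> Hd /subnK <-; elim: (d' - d)%N => [|k IH]; first by rewrite add0n.
by rewrite addSn; apply/(le_trans _ IH)/ltW/hbdec; rewrite addn_gt0 Hd orbT.
Qed.

Lemma sum_if_pred N (P : pred nat) (C : R) :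
  \sum_(w < N) (if P w then C else 0) = (#|[pred w : 'I_N | P w]|)%:R * C.
Proof. by rewrite -big_mkcond /= sumr_const mulr_natl. Qed.

Lemma sum_if_eq N x (C : R) : (x < N)%N ->
  \sum_(w < N) (if (w : nat) == x then C else 0) = C.
Proof. by move=> Hx; rewrite (sum_if_pred N (pred1 x)) card_eq1 // mul1r. Qed.

Section BoundedNetwork.
Variables (N : nat) (a : rel nat).
Hypothesis a_bounded : forall x y, a x y -> ((x < N) && (y < N))%N.

Lemma dist_payoff_ge0 j w : 0 <= dist_payoff N a j w.
Proof.
rewrite /dist_payoff; case: ifP => [/andP[_ Hd]|Hn].
  have hb := hbpos (ltnW Hd).
  case: ifP => _; last by rewrite subr0 ltW.
  rewrite -{1}(mul1r (b _)) -mulrBl mulr_ge0 // ?subr_ge0 ltW //.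
case: ifP => [/existsP[x Hx]|_]; last by rewrite subr0.
have [_ _ _ Hc _] := ess_basic a_bounded Hx.
by move: Hn; rewrite Hc (ess_dist a_bounded Hx).
Qed.

Lemma dist_payoff_near j w : (j == w) || a j w -> dist_payoff N a j w = 0.
Proof.
move=> H; have Hd : (dist N a j w <= 1)%N by apply: dist_le; rewrite reach1.
rewrite /dist_payoff ifF; last by apply/negbTE; rewrite negb_and -leqNgt Hd orbT.
rewrite ifF ?subr0 //; apply/negbTE/existsP => [[x Hx]].
by move: (ess_dist a_bounded Hx); rewrite ltnNge Hd.
Qed.

Lemma dist_payoff_disc j w : ~~ connected N a j w -> dist_payoff N a j w = 0.
Proof.
move=> H; rewrite /dist_payoff ifF; last by rewrite (negbTE H).
rewrite ifF ?subr0 //; apply/negbTE/existsP => [[x Hx]].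
by have [_ _ _ Hc _] := ess_basic a_bounded Hx; move: H; rewrite Hc.
Qed.

Lemma dist_payoff_le d j w : (1 < d)%N ->
  (connected N a j w ->
     [exists x : 'I_N, essential N a x j w] && ~~ reachw N a d.-1 j w) ->
  dist_payoff N a j w <= (1 - gam) * b d.
Proof.
move=> Hd H.
have hg : 0 <= 1 - gam by rewrite subr_ge0 ltW.
case: (boolP (connected N a j w)) => Hc; last first.
  by rewrite dist_payoff_disc // mulr_ge0 // ltW // hbpos // ltnW.
have /andP[He Hr] := H Hc.
have Hdd : (d <= dist N a j w)%N.
  by have := dist_gt Hc Hr; case: d Hd {H Hr}.
rewrite /dist_payoff Hc He (leq_trans Hd Hdd) /=.
by rewrite -{1}(mul1r (b _)) -mulrBl ler_wpM2l // b_antitone // ltnW.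
Qed.

Lemma dist_payoff_eq2 j w : (2 <= N)%N -> reachw N a 2 j w -> j != w -> ~~ a j w ->
  [exists x : 'I_N, essential N a x j w] -> dist_payoff N a j w = (1 - gam) * b 2.
Proof.
move=> HN H2 Hjw Hn He.
have Hc : connected N a j w := reach_mono HN H2.
have Hd : dist N a j w = 2%N.
  apply/eqP; rewrite eqn_leq (dist_le H2) /=; apply: (dist_gt (d := 1)) => //.
  by rewrite (reach1 a_bounded) negb_or Hjw.
by rewrite /dist_payoff Hc He Hd /= mulrBl mul1r.
Qed.

Lemma broker_payoff_ge0 j y z : 0 <= broker_payoff N a j y z.
Proof.
rewrite /broker_payoff; case: ifP => [/andP[_ He]|_] //.
have Hd := ess_dist a_bounded He.
by rewrite !mulr_ge0 ?invr_ge0 // ltW // hbpos // ltnW.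
Qed.

Lemma broker_payoff_zero j y z : ~~ essential N a j y z -> broker_payoff N a j y z = 0.
Proof. by move=> H; rewrite /broker_payoff (negbTE H) andbF. Qed.

Lemma broker_payoff_eq j y z : (2 <= N)%N -> essential N a j y z -> a y j -> a j z ->
  (y < z)%N -> broker_payoff N a j y z = gam * 2 * b 2.
Proof.
move=> HN He Hyj Hjz Hyz.
have [_ _ Hyz' _ Hn] := ess_basic a_bounded He.
rewrite /broker_payoff Hyz He (ecount1 a_bounded He Hyj Hjz).
by rewrite (dist2 a_bounded Hyz' Hn Hyj Hjz HN) divr1.
Qed.

Lemma U_ge0 j : c < b 1%N -> 0 <= U N a j.
Proof.
move=> hc; rewrite /U; apply: addr_ge0; first apply: addr_ge0.
- by rewrite mulr_ge0 ?ler0n ?subr_ge0 ?ltW.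
- by apply: sumr_ge0 => w _; exact: dist_payoff_ge0.
- by apply: sumr_ge0 => y _; apply: sumr_ge0 => z _; exact: broker_payoff_ge0.
Qed.

Lemma off_hub_not_essential x k : (x < N)%N -> (k < N)%N -> x != k ->
  (forall w, (w < N)%N -> w != x -> w != k -> a w k && a k w) ->
  forall y z : 'I_N, ~~ essential N a x y z.
Proof.
move=> Hx Hk Hxk Hhub y z.
case: (eqVneq x y) => [<-|Hxy]; first by rewrite /essential eqxx !andbF.
case: (eqVneq x z) => [<-|Hxz]; first by rewrite /essential eqxx !andbF.
have Hyx : (y : nat) != x by rewrite eq_sym.
have Hzx : (z : nat) != x by rewrite eq_sym.
apply: (ess_hub a_bounded Hxk) => //; last exact: two_le Hx Hk Hxk.
- case: (eqVneq (y : nat) k) => //= Hyk.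
  by have /andP[] := Hhub y (ltn_ord y) Hyx Hyk.
- case: (eqVneq k (z : nat)) => //= Hkz.
  have Hzk : (z : nat) != k by rewrite eq_sym.
  by have /andP[] := Hhub z (ltn_ord z) Hzx Hzk.
Qed.

Lemma U_no_broker j : (forall y z : 'I_N, ~~ essential N a j y z) ->
  U N a j = (#|[pred w : 'I_N | a j w]|)%:R * (b 1%N - c) + \sum_(w < N) dist_payoff N a j w.
Proof.
move=> Hne; rewrite /U [X in _ + X]big1 ?addr0 // => y _.
by apply: big1 => z _; apply: broker_payoff_zero.
Qed.

End BoundedNetwork.

Lemma star_dist_payoff N k j w : (k < N)%N -> (j < N)%N -> (w < N)%N ->
  dist_payoff N (star N k) j w =
    if [&& j != k, w != k & w != j] then (1 - gam) * b 2 else 0.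
Proof.
move=> Hk Hj Hw; have Sb := @star_bounded N k.
case: ifP => [/and3P[Hjk Hwk Hwj]|Hn].
  have HN := two_le Hj Hk Hjk.
  have Sjk : star N k j k by apply: star_in; rewrite ?eqxx ?orbT.
  have Skw : star N k k w by apply: star_in; rewrite ?eqxx // eq_sym.
  have H2 := reach2 Sb Sjk Skw.
  apply: (dist_payoff_eq2 Sb HN H2); first by rewrite eq_sym.
    by rewrite /star (negbTE Hjk) (negbTE Hwk) !andbF.
  apply/existsP; exists (Ordinal Hk) => /=.
  apply: ess_pendant => //; rewrite 1?eq_sym //; first exact: reach_mono HN H2.
  by move=> w'; apply: star_leaf.
apply: (dist_payoff_near Sb); move: Hn.
case: (eqVneq w j) => [->|Hwj] /=; first by [].
case: (eqVneq j k) => [Ejk|Hjk] /=.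
  by subst j => _; apply: star_in; rewrite // ?eqxx // eq_sym.
case: (eqVneq w k) => [->|Hwk] //= _.
by apply: star_in; rewrite ?eqxx ?orbT // eq_sym.
Qed.

Lemma star_center_broker N k y z : (k < N)%N -> (y < N)%N -> (z < N)%N ->
  broker_payoff N (star N k) k y z =
    if [&& (y < z)%N, y != k & z != k] then gam * 2 * b 2 else 0.
Proof.
move=> Hk Hy Hz; have Sb := @star_bounded N k.
case: ifP => [/and3P[Hyz Hyk Hzk]|Hn].
  have Hyz' : y != z by rewrite neq_ltn Hyz.
  have HN := two_le Hy Hk Hyk.
  have Syk : star N k y k by apply: star_in; rewrite ?eqxx ?orbT.
  have Skz : star N k k z by apply: star_in; rewrite ?eqxx // eq_sym.
  apply: (broker_payoff_eq Sb HN) => //.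
  apply: ess_pendant => //; rewrite 1?eq_sym //; first exact: reach_mono HN (reach2 Sb Syk Skz).
  by move=> w'; apply: star_leaf.
rewrite /broker_payoff; case: ifP => // /andP[Hyz He]; move: Hn; rewrite Hyz /=.
by case/and5P: He => _ Hky Hkz _ _; rewrite eq_sym Hky eq_sym Hkz.
Qed.

Lemma star_hub N k (a : rel nat) : (forall x y, star N k x y -> a x y) ->
  (k < N)%N -> forall w, (w < N)%N -> w != k -> a w k && a k w.
Proof.
move=> Hsub Hk w Hw Hwk.
by rewrite !Hsub // (star_in Hw Hk, star_in Hk Hw) ?eqxx ?orbT // eq_sym.
Qed.

Lemma U_center N k : (k < N)%N -> U N (star N k) k =
  (N - 1)%:R * (b 1 - c) +
  \sum_(y < N) \sum_(z < N)
    (if [&& (y < z)%N, (y : nat) != k & (z : nat) != k] then gam * 2 * b 2 else 0).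
Proof.
move=> Hk; rewrite /U deg_center // big1 ?addr0; last first.
  by move=> w _; rewrite star_dist_payoff // eqxx.
by congr (_ + _); apply: eq_bigr => y _; apply: eq_bigr => z _; apply: star_center_broker.
Qed.

Lemma leaf_indirect_sum N k j : (k < N)%N -> (j < N)%N -> j != k ->
  \sum_(w < N) dist_payoff N (star N k) j w = (N - 2)%:R * ((1 - gam) * b 2).
Proof.
move=> Hk Hj Hjk.
under eq_bigr => w _ do rewrite star_dist_payoff // Hjk /=.
by rewrite (sum_if_pred N (fun w : nat => (w != k) && (w != j))) card_ne2 // eq_sym.
Qed.

Lemma U_leaf N k j : (k < N)%N -> (j < N)%N -> j != k ->
  U N (star N k) j = (b 1 - c) + (N - 2)%:R * ((1 - gam) * b 2).
Proof.
move=> Hk Hj Hjk.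
rewrite U_no_broker; last first.
  apply: (off_hub_not_essential (@star_bounded N k) Hj Hk Hjk) => w Hw _ Hwk.
  exact: (star_hub (fun x y (h : star N k x y) => h)).
by rewrite deg_leaf // mul1r leaf_indirect_sum.
Qed.

Lemma isolated_U0 N (a : rel nat) j :
  (forall x y, a x y -> ((x < N) && (y < N))%N) ->
  (forall w, a j w = false) -> (forall w, a w j = false) -> U N a j = 0.
Proof.
move=> Hb iso1 iso2.
have Hav : avoid a j = a.
  apply: functional_extensionality => u; apply: functional_extensionality => v.
  rewrite /avoid; case H: (a u v) => //=.
  by apply/andP; split; apply/negP => /eqP E; subst; rewrite ?iso1 ?iso2 in H.
rewrite U_no_broker; last first.
  by move=> y z; rewrite /essential Hav; case: (connected _ _ _ _); rewrite !andbF.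
have -> : #|[pred w : 'I_N | a j w]| = 0%N by apply: eq_card0 => w; rewrite !inE iso1.
rewrite mul0r add0r big1 // => w _.
case: (eqVneq (w : nat) j) => [Ew|Hw]; first by apply: (dist_payoff_near Hb); rewrite Ew eqxx.
apply: (dist_payoff_disc Hb); apply/negP => Hc.
suff : pred1 j (w : nat) by rewrite /= (negbTE Hw).
by apply: (reach_closed (P := pred1 j) _ _ Hc) => //= w' z' /eqP ->; rewrite iso1.
Qed.

Lemma leaf_drop_unprofitable N k i : c < b 1 -> (k < N)%N -> i != k ->
  U N (del_link (star N k) i k) i <= U N (star N k) i.
Proof.
move=> hc Hk Hik.
have Sb := @star_bounded N k.
rewrite isolated_U0 ?U_ge0 //; first exact: del_link_bounded.
  move=> w; rewrite /del_link; case H: (star N k i w) => //=.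
  by rewrite (eqP (star_leaf Hik H)) !eqxx.
move=> w; rewrite /del_link; case H: (star N k w i) => //=.
have : w == k by move: H => /and4P[_ _ _]; rewrite (negbTE Hik) orbF.
by move/eqP->; rewrite !eqxx orbT.
Qed.

Section CenterDrop.
Variables (N k l : nat).
Hypotheses (Hk : (k < N)%N) (Hl : (l < N)%N) (Hlk : l != k).
Let a' := del_link (star N k) k l.

Lemma center_drop_bounded x y : a' x y -> ((x < N) && (y < N))%N.
Proof. exact: del_link_bounded (@star_bounded N k) x y. Qed.

Lemma center_drop_links w : (w < N)%N -> w != k -> w != l -> a' k w && a' w k.
Proof.
move=> Hw Hwk Hwl; rewrite /a' /del_link /is_link (negbTE Hwl) (negbTE Hwk) eqxx /=.
by rewrite andbF andbT !star_in ?eqxx ?orbT // eq_sym.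
Qed.

Lemma center_drop_reach m y z : reachw N a' m y z -> (y == l) = (z == l).
Proof.
have iso v : a' l v = false.
  rewrite /a' /del_link; case H: (star N k l v) => //=.
  by rewrite (eqP (star_leaf Hlk H)) !eqxx orbT.
have iso' u : a' u l = false.
  rewrite /a' /del_link; case H: (star N k u l) => //=.
  have : u == k by move: H => /and4P[_ _ _]; rewrite (negbTE Hlk) orbF.
  by move/eqP->; rewrite !eqxx.
have step w z' : (y == l) == (w == l) -> a' w z' -> (y == l) == (z' == l).
  move=> /eqP -> Ha.
  have [Hw Hz] : w != l /\ z' != l by split; apply: contraTneq Ha => ->; rewrite ?iso ?iso'.
  by rewrite (negbTE Hw) (negbTE Hz).
move=> H; have := reach_closed (P := fun u => (y == l) == (u == l)) (eqxx _) step H.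
by move/eqP.
Qed.

Lemma center_drop_broker y z : (y < N)%N -> (z < N)%N ->
  broker_payoff N a' k y z <= broker_payoff N (star N k) k y z.
Proof.
move=> Hy Hz; have Sb := @star_bounded N k.
case: (boolP (essential N a' k y z)) => He; last first.
  by rewrite broker_payoff_zero // (broker_payoff_ge0 Sb).
case: (boolP (y < z)%N) => Hyz; last by rewrite {1}/broker_payoff (negbTE Hyz) /= (broker_payoff_ge0 Sb).
have [Hky Hkz Hyz' Hc _] := ess_basic center_drop_bounded He.
have [Hyk Hzk] : y != k /\ z != k by rewrite !(eq_sym _ k).
have Hyl : y != l.
  by apply: contraNneq Hyz' => Eyl; move: (center_drop_reach Hc); rewrite Eyl eqxx => /esym/eqP ->.
have Hzl : z != l by rewrite -(center_drop_reach Hc).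
have HN := two_le Hl Hk Hlk.
rewrite (broker_payoff_eq center_drop_bounded HN He) //.
- by rewrite star_center_broker // Hyz Hyk Hzk.
- by have /andP[] := center_drop_links Hy Hyk Hyl.
- by have /andP[] := center_drop_links Hz Hzk Hzl.
Qed.

Lemma center_drop_unprofitable : c < b 1 -> U N a' k <= U N (star N k) k.
Proof.
move=> hc; have Sb := @star_bounded N k.
rewrite /U; apply: lerD; first apply: lerD.
- apply: ler_wpM2r; first by rewrite subr_ge0 ltW.
  rewrite ler_nat; apply: subset_leq_card; apply/subsetP => w; rewrite !inE.
  by case/andP.
- apply: ler_sum => w _; rewrite (le_trans _ (dist_payoff_ge0 Sb _ _)) //.
  case: (eqVneq (w : nat) k) => [->|Hwk].
    by rewrite (dist_payoff_near center_drop_bounded) ?eqxx.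
  case: (eqVneq (w : nat) l) => [Ew|Hwl].
    rewrite (dist_payoff_disc center_drop_bounded) //; apply/negP => /center_drop_reach.
    by rewrite Ew eqxx eq_sym (negbTE Hlk).
  rewrite (dist_payoff_near center_drop_bounded) //.
  by case/andP: (center_drop_links (ltn_ord w) Hwk Hwl) => ->; rewrite orbT.
- apply: ler_sum => y _; apply: ler_sum => z _; exact: center_drop_broker.
Qed.

End CenterDrop.

Section LeafLink.
Variables (N k i j : nat).
Hypotheses (Hk : (k < N)%N) (Hi : (i < N)%N) (Hj : (j < N)%N).
Hypotheses (Hik : i != k) (Hjk : j != k) (Hij : i != j).
Let a' := add_link (star N k) i j.

Lemma leaf_link_bounded x y : a' x y -> ((x < N) && (y < N))%N.
Proof. exact: add_link_bounded Hi Hj (@star_bounded N k) x y. Qed.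

Lemma leaf_link_nbrs w : (w < N)%N -> a' i w = (w == k) || (w == j).
Proof.
move=> Hw; rewrite /a' add_linkE /is_link eqxx /= (negbTE Hij) /= orbF.
rewrite /star Hi Hw (negbTE Hik) /=.
by case: (eqVneq w k) => [->|_] //=; rewrite ?Hik ?andbF.
Qed.

(* Linking to leaf j turns j's indirect payoff (1-gam) b_2 into a direct one and
   leaves every other indirect payoff at most (1-gam) b_2, as k stays a broker. *)
Lemma leaf_link_dist_payoff (w : 'I_N) :
  dist_payoff N a' i w + (if (w : nat) == j then (1 - gam) * b 2 else 0)
  <= dist_payoff N (star N k) i w.
Proof.
have Hw := ltn_ord w.
case: (eqVneq (w : nat) j) => [Ew|Hwj].
  rewrite Ew (dist_payoff_near leaf_link_bounded); last by rewrite leaf_link_nbrs // eqxx !orbT.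
  by rewrite star_dist_payoff // Hik Hjk eq_sym Hij add0r.
rewrite addr0.
case: (eqVneq (w : nat) i) => [Ew|Hwi].
  by rewrite (dist_payoff_near leaf_link_bounded) ?Ew ?eqxx // (dist_payoff_ge0 (@star_bounded N k)).
case: (eqVneq (w : nat) k) => [Ew|Hwk].
  rewrite (dist_payoff_near leaf_link_bounded) ?leaf_link_nbrs ?Ew ?eqxx ?orbT //.
  exact: (dist_payoff_ge0 (@star_bounded N k)).
rewrite star_dist_payoff // Hik Hwk Hwi.
apply: (dist_payoff_le leaf_link_bounded) => // Hc; apply/andP; split; last first.
  by rewrite (reach1 leaf_link_bounded) leaf_link_nbrs // !negb_or eq_sym Hwi Hwk Hwj.
apply/existsP; exists (Ordinal Hk).
rewrite /essential /= Hk eq_sym Hik eq_sym Hwk Hc /=; apply/negP => H.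
suff : ((w : nat) == i) || ((w : nat) == j) by rewrite (negbTE Hwi) (negbTE Hwj).
apply: (reach_closed (P := fun u => (u == i) || (u == j)) _ _ H); first by rewrite eqxx.
move=> u v Hu /and3P[]; rewrite /a' add_linkE => /orP[Hs|Hp] _ Hv.
  have Hvk : v == k by apply: star_leaf Hs; case/orP: Hu => /eqP ->.
  by move: Hv; rewrite Hvk.
by have [_ _ ->] := is_link_ends Hij Hp.
Qed.

Lemma leaf_link_unprofitable : b 1 - b 2 + gam * b 2 <= c ->
  U N a' i <= U N (star N k) i.
Proof.
move=> hc.
have HS : \sum_(w < N) dist_payoff N a' i w + (1 - gam) * b 2 <= (N - 2)%:R * ((1 - gam) * b 2).
  rewrite -(leaf_indirect_sum Hk Hi Hik) -[X in _ + X](sum_if_eq _ Hj) -big_split /=.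
  by apply: ler_sum => w _; exact: leaf_link_dist_payoff.
set C := (1 - gam) * b 2 in HS *.
rewrite U_leaf // U_no_broker; last first.
  apply: (off_hub_not_essential leaf_link_bounded Hi Hk Hik) => w Hw _ Hwk.
  by apply: (star_hub _ Hk) => // x y Hxy; rewrite /a' add_linkE Hxy.
have -> : #|[pred w : 'I_N | a' i w]| = 2%N.
  rewrite -(card_eq2 Hk Hj); last by rewrite eq_sym.
  by apply: eq_card => w; rewrite !inE leaf_link_nbrs.
have hc' : b 1 - c <= C by rewrite /C mulrBl mul1r; lra.
rewrite -/C; set S := \sum_(w < N) _ in HS *; lra.
Qed.

End LeafLink.

Hypothesis hc1 : b 1%N - b 2%N + gam * b 2%N <= c.
Hypothesis hc2 : c < b 1%N.

Lemma star_no_improving_option n e k i e' : (k < n)%N -> (i < n)%N ->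
  adj n e = star n k -> option_result b c gam n e i e' ->
  utility b c gam n e' i <= utility b c gam n e i.
Proof.
move=> Hk Hi Hadj.
case=> [[j [Hij ->]]|[j [Hj Hji Hnadj _ ->]]]; rewrite !utilityE.
  rewrite adj_del Hadj; rewrite Hadj in Hij.
  have /and4P[_ Hj Hij' _] := Hij.
  case: (eqVneq i k) => [Eik|Hik].
    by subst i; apply: center_drop_unprofitable; rewrite // eq_sym.
  by rewrite -(eqP (star_leaf Hik Hij)); apply: leaf_drop_unprofitable.
rewrite Hadj in Hnadj.
rewrite adj_add // 1?eq_sym // Hadj.
have Hik : i != k.
  by apply: contraNneq Hnadj => Eik; subst i; apply: star_in; rewrite ?eqxx // eq_sym.
have Hjk : j != k.
  by apply: contraNneq Hnadj => Ejk; subst j; apply: star_in; rewrite ?eqxx ?orbT // eq_sym.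
by apply: leaf_link_unprofitable; rewrite // eq_sym.
Qed.

Lemma sum_ext2 n (g : nat -> nat -> R) : (forall y z, 0 <= g y z) ->
  \sum_(y < n) \sum_(z < n) g y z <= \sum_(y < n.+1) \sum_(z < n.+1) g y z.
Proof.
move=> Hg; rewrite big_ord_recr /= -[X in X <= _]addr0; apply: lerD; last first.
  by apply: sumr_ge0 => z _.
apply: ler_sum => y _; rewrite big_ord_recr /= -[X in X <= _]addr0.
by apply: lerD => //; apply: ler_sum => z _.
Qed.

(* The center of a star accepts a newcomer: one more direct link worth
   b_1 - c > 0, and more pairs to broker. *)
Lemma center_accepts_entrant n k : (k < n)%N ->
  U n (star n k) k <= U n.+1 (star n.+1 k) k.
Proof.
move=> Hk; rewrite !U_center //; last exact: ltnW.
apply: lerD.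
  apply: ler_wpM2r; first by rewrite subr_ge0 ltW.
  by rewrite ler_nat; lia.
apply: (@sum_ext2 n (fun y z : nat =>
  if [&& (y < z)%N, y != k & z != k] then gam * 2 * b 2 else 0)) => y z.
case: ifP => // _.
by rewrite !mulr_ge0 // ltW // hbpos.
Qed.

Section LeafEntry.
Variables (n k l : nat).
Hypotheses (Hk : (k < n)%N) (Hl : (l < n)%N) (Hlk : l != k).
Let a2 := add_link (star n k) n l.

Lemma leaf_entry_bounded x y : a2 x y -> ((x < n.+1) && (y < n.+1))%N.
Proof.
apply: add_link_bounded => //; first exact: ltnW.
by move=> u v /star_bounded /andP[h1 h2]; rewrite !ltnS (ltnW h1) (ltnW h2).
Qed.

Lemma leaf_entry_nbrs w : a2 n w = (w == l).
Proof.
rewrite /a2 add_linkE /star ltnn /= /is_link eqxx /=.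
by rewrite (negbTE (_ : n != l)) ?orbF // neq_ltn Hl orbT.
Qed.

Lemma leaf_entry_nbrs_of_l w : a2 l w -> (w == k) || (w == n).
Proof.
rewrite /a2 add_linkE /is_link => /orP[/and4P[_ _ _]|].
  by rewrite (negbTE Hlk) /= => ->.
rewrite eqxx /= => /orP[/andP[/eqP E _]|->]; last by rewrite orbT.
by move: Hl; rewrite E ltnn.
Qed.

(* Bound on what the newcomer gets from w: (1-gam) b_2 from k, (1-gam) b_3 from
   the other old nodes except l. *)
Definition leaf_entry_bound (w : nat) : R :=
  (if (w != n) && (w != l) then (1 - gam) * b 3 else 0) +
  (if w == k then (1 - gam) * (b 2 - b 3) else 0).

Lemma leaf_entry_bound_ge0 w : 0 <= leaf_entry_bound w.
Proof.
have hg : 0 <= 1 - gam by rewrite subr_ge0 ltW.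
rewrite /leaf_entry_bound addr_ge0 //; case: ifP => _ //; rewrite mulr_ge0 //.
  by rewrite ltW // hbpos.
by rewrite subr_ge0 ltW // hbdec.
Qed.

(* The newcomer is at distance 2 from k and 3 from the other leaves, always
   brokered by l. *)
Lemma leaf_entry_dist_payoff (w : 'I_n.+1) :
  dist_payoff n.+1 a2 n w <= leaf_entry_bound w.
Proof.
have Hw := ltn_ord w.
have [Ew|Hwn] := eqVneq (w : nat) n.
  by rewrite (dist_payoff_near leaf_entry_bounded) ?leaf_entry_bound_ge0 ?Ew ?eqxx.
have [Ew|Hwl] := eqVneq (w : nat) l.
  rewrite (dist_payoff_near leaf_entry_bounded) ?leaf_entry_bound_ge0 //.
  by rewrite leaf_entry_nbrs Ew eqxx orbT.
have Hess : connected n.+1 a2 n w -> [exists x : 'I_n.+1, essential n.+1 a2 x n w].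
  move=> Hc; apply/existsP; exists (Ordinal (ltnW Hl : (l < n.+1)%N)).
  have Hln : l != n by rewrite neq_ltn Hl.
  apply: ess_pendant; rewrite //= 1?eq_sym //; first exact: ltnW.
  by move=> w'; rewrite leaf_entry_nbrs.
rewrite /leaf_entry_bound Hwn Hwl /=.
have [Ew|Hwk] := eqVneq (w : nat) k.
  rewrite -mulrDr addrCA subrr addr0.
  apply: (dist_payoff_le leaf_entry_bounded) => // Hc; rewrite Hess //.
  by rewrite (reach1 leaf_entry_bounded) leaf_entry_nbrs negb_or eq_sym Hwn Hwl.
rewrite addr0; apply: (dist_payoff_le leaf_entry_bounded) => // Hc; rewrite Hess //.
have -> : reachw n.+1 a2 2 n w =
    reachw n.+1 a2 1 n w || [exists u : 'I_n.+1, reachw n.+1 a2 1 n u && a2 u w] by [].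
rewrite (reach1 leaf_entry_bounded) leaf_entry_nbrs eq_sym (negbTE Hwn) (negbTE Hwl) orFb.
apply/negP; case/existsP => u /andP[]; rewrite (reach1 leaf_entry_bounded) leaf_entry_nbrs.
case/orP=> [/eqP <-|/eqP ->]; first by rewrite leaf_entry_nbrs (negbTE Hwl).
by move/leaf_entry_nbrs_of_l; rewrite (negbTE Hwk) (negbTE Hwn).
Qed.

Lemma leaf_entry_U_bound :
  U n.+1 a2 n <=
  (b 1 - c) + ((n.+1 - 2)%:R * ((1 - gam) * b 3) + (1 - gam) * (b 2 - b 3)).
Proof.
have Hnk : n != k by rewrite neq_ltn Hk orbT.
rewrite U_no_broker; last first.
  apply: (off_hub_not_essential leaf_entry_bounded (ltnSn n) (ltnW Hk) Hnk).
  move=> w Hw Hwn Hwk; have Hw' : (w < n)%N by rewrite ltn_neqAle Hwn -ltnS.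
  by rewrite /a2 !add_linkE !star_in ?eqxx ?orbT // eq_sym.
have -> : #|[pred w : 'I_n.+1 | a2 n w]| = 1%N.
  by rewrite -(card_eq1 (ltnW Hl : (l < n.+1)%N)); apply: eq_card => w; rewrite !inE leaf_entry_nbrs.
rewrite mul1r lerD2l.
apply: le_trans (ler_sum _ (fun w _ => leaf_entry_dist_payoff w)) _.
rewrite /leaf_entry_bound big_split /= (sum_if_pred n.+1 (fun w : nat => (w != n) && (w != l))).
rewrite card_ne2 ?ltnSn ?neq_ltn ?Hl ?orbT ?(@sum_if_eq n.+1 k) //; exact: ltnW.
Qed.

End LeafEntry.

Variable c0 : R.
Hypothesis hc0 : c0 < (1 - gam) * (b 2%N - b 3%N).

(* With at least three nodes, joining a leaf pays strictly less than joining
   the center: each of the n - 2 other leaves is one step closer, a gain of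
   (1-gam)(b_2 - b_3) per leaf that outweighs the entry cost c0 per leaf. *)
Lemma leaf_entry_worse n k l : (3 <= n)%N -> (k < n)%N -> (l < n)%N -> l != k ->
  U n.+1 (add_link (star n k) n l) n - c0 * 1%:R <
  U n.+1 (star n.+1 k) n - c0 * (n - 1)%:R.
Proof.
move=> Hn Hk Hl Hlk.
have Hnk : n != k by rewrite neq_ltn Hk orbT.
rewrite U_leaf //; last exact: ltnW.
apply: le_lt_trans (lerD (leaf_entry_U_bound Hk Hl Hlk) (lexx (- (c0 * 1%:R)))) _.
have -> : (n.+1 - 2)%N = ((n - 2) + 1)%N by lia.
have -> : (n - 1)%N = ((n - 2) + 1)%N by lia.
rewrite !natrD; set m := (n - 2)%:R.
have hm : 0 < m by rewrite ltr0n; lia.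
rewrite -subr_gt0.
have -> : b 1 - c + (m + 1%:R) * ((1 - gam) * b 2) - c0 * (m + 1%:R) -
  (b 1 - c + ((m + 1%:R) * ((1 - gam) * b 3) + (1 - gam) * (b 2 - b 3)) - c0 * 1%:R) =
  m * ((1 - gam) * (b 2 - b 3) - c0) by ring.
by rewrite mulr_gt0 // subr_gt0.
Qed.

Lemma entry_keeps_star n (e : rel nat) k T :
  (forall x y, e x y -> ((x < n) && (y < n))%N) -> (k < n)%N -> adj n e = star n k ->
  (T < n)%N ->
  (forall T', (T' < n)%N -> entry_accepts b c gam n e T' ->
     entry_value b c gam c0 n e T' <= entry_value b c gam c0 n e T) ->
  exists2 k', (k' < n.+1)%N & adj n.+1 (add_link e n T) = star n.+1 k'.
Proof.
move=> Hbd Hk Hadj HT Hmax.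
rewrite adj_entry // Hadj.
have [->|HTk] := eqVneq T k; first by exists k; rewrite ?star_entry // ltnW.
have [Hn2|Hn3] := leqP n 2.
  have En : n = 2%N by move/eqP: HTk; lia.
  by subst n; exists T; [exact: ltnW | rewrite (star2 Hk HT) star_entry].
have Hacck : entry_accepts b c gam n e k.
  rewrite /entry_accepts !utilityE adj_entry // Hadj star_entry //.
  exact: center_accepts_entrant.
have := Hmax k Hk Hacck.
rewrite /entry_value !utilityE !adj_entry // Hadj star_entry // /deg Hadj.
by rewrite deg_center // deg_leaf // leNgt leaf_entry_worse.
Qed.

Lemma reachable_star n (e : rel nat) : reachable b c gam c0 n e ->
  (forall x y, e x y -> ((x < n) && (y < n))%N) /\
  exists2 k, (k < n)%N & adj n e = star n k.
Proof.
elim=> [|{}n {}e T _ [Hbd [k Hk Hadj]] _ HT _ _ Hmax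
         |{}n {}e i e' _ [Hbd [k Hk Hadj]] Hi Hopt Himp _].
- split => //; exists 0%N => //.
  apply: functional_extensionality => x; apply: functional_extensionality => y.
  by rewrite /adj /star; case: x => [|x]; case: y => [|y].
- split; last exact: (entry_keeps_star Hbd Hk Hadj HT Hmax).
  move=> x y; rewrite add_linkE => /orP[/Hbd/andP[h1 h2]|].
    by rewrite !ltnS (ltnW h1) (ltnW h2).
  by case/orP=> /andP[/eqP-> /eqP->]; rewrite !ltnS leqnn (ltnW HT).
- by move: Himp; rewrite ltNge (star_no_improving_option Hk Hi Hadj Hopt).
Qed.

End Payoffs.

Unset Implicit Arguments.

Theorem theorem1 (R : realFieldType) (b : nat -> R) (c gam c0 : R)
  (hbdec : forall i : nat, (0 < i)%N -> b i.+1 < b i)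
  (hbpos : forall i : nat, (0 < i)%N -> 0 < b i)
  (hg0 : 0 <= gam) (hg1 : gam < 1)
  (hc1 : b 1%N - b 2%N + gam * b 2%N <= c) (hc2 : c < b 1%N)
  (hc0 : c0 < (1 - gam) * (b 2%N - b 3%N)) :
  forall (n : nat) (e : rel nat),
    reachable b c gam c0 n e -> pairwise_stable b c gam n e -> is_star n e.
Proof.
move=> n e Hr _.
have [_ [k Hk Hadj]] := reachable_star hbdec hbpos hg0 hg1 hc1 hc2 hc0 Hr.
by exists k => // x y Hx Hy Hxy; rewrite Hadj /star Hx Hy Hxy.
Qed.
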